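(* Consider the one-dimensional relativistic hydrodynamics system $\partial_t\mathbf{u}+\partial_x\mathbf{f}(\mathbf{u})=0$ with $\mathbf{u}=(D,m_1,E)^\top$ and $\mathbf{f}(\mathbf{u})=(Dv_1,\,m_1v_1+p,\,m_1)^\top$, closed by any one of the equations of state ID-EOS, TM-EOS, IP-EOS or RC-EOS described in the context. Let $\mathcal{U}'_{\mathrm{ad}}=\{(D,m_1,E): D>0,\ E-\sqrt{D^2+m_1^2}>0\}$. Let $\Delta x>0$, $\Delta t>0$, $w_i>0$, and let $\mathbf{u}^n_{i-1},\mathbf{u}^n_i,\mathbf{u}^n_{i+1}\in\mathcal{U}'_{\mathrm{ad}}$. Define \[ \mathbf{u}^{n+1}_i=\mathbf{u}^n_i-\frac{\Delta t}{w_i\Delta x}\Big[\mathbf{f}^{\mathrm{NF}}(\mathbf{u}^n_i,\mathbf{u}^n_{i+1})-\mathbf{f}^{\mathrm{NF}}(\mathbf{u}^n_{i-1},\mathbf{u}^n_i)\Big], \] where $\mathbf{f}^{\mathrm{NF}}$ is the Rusanov flux \[ \mathbf{f}^{\mathrm{NF}}(\mathbf{u}^-,\mathbf{u}^+)=\tfrac12\big[\mathbf{f}(\mathbf{u}^-)+\mathbf{f}(\mathbf{u}^+)\big]-\tfrac12\lambda(\mathbf{u}^-,\mathbf{u}^+)\,[\mathbf{u}^+-\mathbf{u}^-],\qquad \lambda(\mathbf{u}^-,\mathbf{u}^+)=\max\{r(\mathbf{u}^-),r(\mathbf{u}^+)\}, \] with $r(\mathbf{u})=\dfrac{|v_1|+c_s}{1+c_s|v_1|}$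 the spectral radius of the flux Jacobian $\mathbf{f}'(\mathbf{u})$. Set $\Lambda_{i-\frac12}=\lambda(\mathbf{u}^n_{i-1},\mathbf{u}^n_i)$ and $\Lambda_{i+\frac12}=\lambda(\mathbf{u}^n_i,\mathbf{u}^n_{i+1})$. If \[ \Delta t\,\frac{\Lambda_{i-\frac12}+\Lambda_{i+\frac12}}{2w_i\Delta x}<1, \] then $\mathbf{u}^{n+1}_i\in\mathcal{U}'_{\mathrm{ad}}$.
   Context: Units with speed of light $1$. Primitive variables: rest-mass density $\rho$, velocity $v_1$, pressure $p$; Lorentz factor $\Gamma=1/\sqrt{1-v_1^2}$; specific enthalpy $h$ given by an equation of state; conservative variables $D=\rho\Gamma$, $m_1=\rho h\Gamma^2 v_1$, $E=\rho h\Gamma^2-p$. The equations of state and corresponding sound speeds $c_s$ are: ID-EOS: $h=1+\frac{\gamma}{\gamma-1}\frac{p}{\rho}$ with constant $\gamma\in(1,2]$, $c_s^2=\frac{\gamma p}{h\rho}$; TM-EOS: $h=\frac{5p}{2\rho}+\sqrt{\frac{9p^2}{4\rho^2}+1}$, $c_s^2=\frac{5p\sqrt{9p^2+4\rho^2}+9p^2}{12p\sqrt{9p^2+4\rho^2}+36p^2+6\rho^2}$; IP-EOS: $h=\frac{2p}{\rho}+\sqrt{\frac{4p^2}{\rho^2}+1}$, $c_s^2=\frac{2p\sqrt{4p^2+\rho^2}}{4p\sqrt{4p^2+\rho^2}+4p^2+\rho^2}$; RC-EOS: $h=\frac{2(6p^2+4p\rho+\rho^2)}{\rho(3p+2\rho)}$,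 $c_s^2=\frac{p(3p+2\rho)(18p^2+24p\rho+5\rho^2)}{3(6p^2+4p\rho+\rho^2)(9p^2+12p\rho+2\rho^2)}$. For each of these equations of state, every $\mathbf{u}\in\mathcal{U}'_{\mathrm{ad}}$ corresponds to unique primitive variables with $\rho>0$, $p>0$, $|v_1|<1$ (this is how $v_1,p,c_s$ and $\mathbf{f}(\mathbf{u})$ are evaluated from $\mathbf{u}$), and $0<c_s<1$. The numbers $w_i$ are positive quadrature weights (sub-cell widths relative to $\Delta x$) of a first-order finite volume update at the $i$-th point. *)

From Stdlib Require Import Reals Lra.
Open Scope R_scope.

Inductive EOS : Type := ID (gamma : R) | TM | IP | RC.

Definition eos_ok (e : EOS) : Prop :=
  match e with ID g => 1 < g <= 2 | _ => True end.

Definition enthalpy (e : EOS) (rho p : R) : R :=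
  match e with
  | ID g => 1 + g / (g - 1) * (p / rho)
  | TM => 5 * p / (2 * rho) + sqrt (9 * p ^ 2 / (4 * rho ^ 2) + 1)
  | IP => 2 * p / rho + sqrt (4 * p ^ 2 / rho ^ 2 + 1)
  | RC => 2 * (6 * p ^ 2 + 4 * p * rho + rho ^ 2) / (rho * (3 * p + 2 * rho))
  end.

Definition sound2 (e : EOS) (rho p : R) : R :=
  match e with
  | ID g => g * p / (enthalpy (ID g) rho p * rho)
  | TM => (5 * p * sqrt (9 * p ^ 2 + 4 * rho ^ 2) + 9 * p ^ 2)
          / (12 * p * sqrt (9 * p ^ 2 + 4 * rho ^ 2) + 36 * p ^ 2 + 6 * rho ^ 2)
  | IP => 2 * p * sqrt (4 * p ^ 2 + rho ^ 2)
          / (4 * p * sqrt (4 * p ^ 2 + rho ^ 2) + 4 * p ^ 2 + rho ^ 2)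
  | RC => p * (3 * p + 2 * rho) * (18 * p ^ 2 + 24 * p * rho + 5 * rho ^ 2)
          / (3 * (6 * p ^ 2 + 4 * p * rho + rho ^ 2) * (9 * p ^ 2 + 12 * p * rho + 2 * rho ^ 2))
  end.

Definition sound (e : EOS) (rho p : R) : R := sqrt (sound2 e rho p).

Record prim : Type := mkPrim { prho : R; pvel : R; ppres : R }.

Definition state : Type := (R * R * R)%type.

Definition lorentz (v : R) : R := 1 / sqrt (1 - v ^ 2).

Definition to_cons (e : EOS) (w : prim) : state :=
  let rho := prho w in let v := pvel w in let p := ppres w in
  let G := lorentz v in let h := enthalpy e rho p in
  (rho * G, rho * h * G ^ 2 * v, rho * h * G ^ 2 - p).

Definition is_prim_of (e : EOS) (w : prim) (u : state) : Prop :=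
  0 < prho w /\ 0 < ppres w /\ Rabs (pvel w) < 1 /\ to_cons e w = u.

Definition Uad (u : state) : Prop :=
  let '(D, m, E) := u in 0 < D /\ 0 < E - sqrt (D ^ 2 + m ^ 2).

Definition flux (w : prim) (u : state) : state :=
  let '(D, m, E) := u in (D * pvel w, m * pvel w + ppres w, m).

Definition specrad (e : EOS) (w : prim) : R :=
  let c := sound e (prho w) (ppres w) in
  (Rabs (pvel w) + c) / (1 + c * Rabs (pvel w)).

Definition lam (e : EOS) (wl wr : prim) : R := Rmax (specrad e wl) (specrad e wr).

Definition sadd (a b : state) : state :=
  let '(a1, a2, a3) := a in let '(b1, b2, b3) := b in (a1 + b1, a2 + b2, a3 + b3).
Definition ssub (a b : state) : state :=
  let '(a1, a2, a3) := a in let '(b1, b2, b3) := b in (a1 - b1, a2 - b2, a3 - b3).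
Definition sscale (k : R) (a : state) : state :=
  let '(a1, a2, a3) := a in (k * a1, k * a2, k * a3).

Definition rusanov (e : EOS) (wl : prim) (ul : state) (wr : prim) (ur : state) : state :=
  ssub (sscale (1/2) (sadd (flux wl ul) (flux wr ur)))
       (sscale (1/2 * lam e wl wr) (ssub ur ul)).

Definition fv_update (e : EOS) (dt dx wi : R)
  (wL : prim) (uL : state) (wC : prim) (uC : state) (wR : prim) (uR : state) : state :=
  ssub uC (sscale (dt / (wi * dx))
             (ssub (rusanov e wC uC wR uR) (rusanov e wL uL wC uC))).

From Stdlib Require Import Reals Rgeom Lra Psatz.
Open Scope R_scope.

(** The update equals
      [(1 - k (Λ_{i-1/2} + Λ_{i+1/2}) / 2) u_C
         + k/2 (Λ_{i-1/2} u_L + f(u_L)) + k/2 (Λ_{i+1/2} u_R - f(u_R))],  [k = dt / (w_i dx)],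
    whose first weight is positive by the CFL condition. The closure of the admissible set is
    the convex cone [D >= 0, E >= |(D, m)|], and an admissible state plus a point of this cone
    is admissible, so it suffices that [t u ± f(u)] lies in the cone for [t >= r(u)]. In
    primitive variables, with [a = t ± v] and [Q = (ρh - p)^2 - ρ^2 - p^2],
      [E'^2 - m'^2 - D'^2 = Γ^2 (a^2 Q - p^2 (1 - t^2) (1 - v^2))],
    and [t >= r(u)], i.e. [t - |v| >= c_s (1 - t |v|)], controls the negative term through the
    sound-speed bound [c_s^2 (Q + p^2) >= p^2], which holds for each of the four equations of
    state. *)

Lemma Rle_div_of_mul_le (x n d : R) : 0 < d -> x * d <= n -> x <= n / d.
Proof.
  intros Hd H; apply (Rmult_le_reg_r d); [exact Hd|].
  now unfold Rdiv; rewrite Rmult_assoc, Rinv_l, Rmult_1_r by lra.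
Qed.

Lemma Rabs_mul_unit (s x : R) : s * s = 1 -> Rabs (s * x) = Rabs x.
Proof.
  intros Hs; rewrite Rabs_mult.
  assert (Habs : Rabs s * Rabs s = 1) by (rewrite <- Rabs_mult, Hs; apply Rabs_R1).
  assert (Hs1 : Rabs s = 1) by (pose proof (Rabs_pos s); nra).
  rewrite Hs1; ring.
Qed.

Lemma pos_of_abs_le (x y : R) : Rabs y <= Rabs x -> 0 < x + y -> 0 < x.
Proof. unfold Rabs; destruct (Rcase_abs x), (Rcase_abs y); lra. Qed.

Lemma sqrt_div_sq (a r : R) : 0 < r -> 0 <= a -> sqrt (a / r ^ 2) = sqrt a / r.
Proof. intros Hr Ha; rewrite sqrt_div_alt, sqrt_pow2 by nra; reflexivity. Qed.

Lemma lorentz_pos (v : R) : Rabs v < 1 -> 0 < lorentz v.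
Proof.
  intros Hv; unfold lorentz.
  assert (0 < 1 - v ^ 2) by (rewrite <- pow2_abs; pose proof (Rabs_pos v); nra).
  apply Rdiv_lt_0_compat; [lra | now apply sqrt_lt_R0].
Qed.

Lemma lorentz_sq (v : R) : Rabs v < 1 -> lorentz v ^ 2 * (1 - v ^ 2) = 1.
Proof.
  intros Hv; unfold lorentz.
  assert (0 < 1 - v ^ 2) by (rewrite <- pow2_abs; pose proof (Rabs_pos v); nra).
  assert (0 < sqrt (1 - v ^ 2)) by now apply sqrt_lt_R0.
  rewrite <- (pow2_sqrt (1 - v ^ 2)) at 2 by lra.
  field; lra.
Qed.

Definition Uad_closure (u : state) : Prop :=
  let '(D, m, E) := u in 0 <= D /\ sqrt (D ^ 2 + m ^ 2) <= E.

Lemma norm2_triangle (a b c d : R) :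
  sqrt ((a + c) ^ 2 + (b + d) ^ 2) <= sqrt (a ^ 2 + b ^ 2) + sqrt (c ^ 2 + d ^ 2).
Proof.
  pose proof (triangle (a + c) (b + d) 0 0 c d) as H.
  unfold dist_euc in H; rewrite !Rsqr_pow2 in H.
  replace (a + c - c) with a in H by ring; replace (b + d - d) with b in H by ring.
  rewrite !Rminus_0_r in H; exact H.
Qed.

Lemma norm2_scale (k a b : R) :
  0 <= k -> sqrt ((k * a) ^ 2 + (k * b) ^ 2) = k * sqrt (a ^ 2 + b ^ 2).
Proof.
  intros Hk; replace ((k * a) ^ 2 + (k * b) ^ 2) with (k ^ 2 * (a ^ 2 + b ^ 2)) by ring.
  rewrite sqrt_mult_alt, sqrt_pow2 by (auto; apply pow2_ge_0); reflexivity.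
Qed.

Lemma Uad_closure_scale (k : R) (u : state) :
  0 <= k -> Uad_closure u -> Uad_closure (sscale k u).
Proof.
  destruct u as [[D m] E]; intros Hk [HD HE]; cbn [sscale Uad_closure].
  rewrite norm2_scale by exact Hk; split; [nra | now apply Rmult_le_compat_l].
Qed.

Lemma Uad_closure_add (u1 u2 : state) :
  Uad_closure u1 -> Uad_closure u2 -> Uad_closure (sadd u1 u2).
Proof.
  destruct u1 as [[D1 m1] E1], u2 as [[D2 m2] E2]; intros [HD1 HE1] [HD2 HE2].
  cbn [sadd Uad_closure]; pose proof (norm2_triangle D1 m1 D2 m2); split; lra.
Qed.

Lemma Uad_scale (k : R) (u : state) : 0 < k -> Uad u -> Uad (sscale k u).
Proof.
  destruct u as [[D m] E]; intros Hk [HD HE]; cbn [sscale Uad].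
  rewrite norm2_scale by lra; split; nra.
Qed.

Lemma Uad_add_closure (u1 u2 : state) : Uad u1 -> Uad_closure u2 -> Uad (sadd u1 u2).
Proof.
  destruct u1 as [[D1 m1] E1], u2 as [[D2 m2] E2]; intros [HD1 HE1] [HD2 HE2].
  cbn [sadd Uad]; pose proof (norm2_triangle D1 m1 D2 m2); split; lra.
Qed.

Lemma Uad_closure_of_sq (D m E : R) :
  0 <= D -> 0 <= E -> D ^ 2 + m ^ 2 <= E ^ 2 -> Uad_closure (D, m, E).
Proof.
  intros HD HE H; split; [exact HD|].
  rewrite <- (sqrt_pow2 E) by exact HE; apply sqrt_le_1_alt, H.
Qed.

Lemma Uad_abs_mom (D m E : R) : Uad (D, m, E) -> Rabs m < E.
Proof.
  intros [_ HE]; rewrite <- sqrt_Rsqr_abs, Rsqr_pow2.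
  assert (sqrt (m ^ 2) <= sqrt (D ^ 2 + m ^ 2)) by (apply sqrt_le_1_alt; nra).
  lra.
Qed.

(** Writing [z = ρh - p], these say [z^2 >= ρ^2 + p^2] and [c_s^2 >= p^2 / (z^2 - ρ^2)];
    they are the only properties of an equation of state used below. *)
Definition thermo_bounds (rho p h c2 : R) : Prop :=
  0 <= c2 /\ rho ^ 2 + p ^ 2 <= (rho * h - p) ^ 2 /\
  p ^ 2 <= c2 * ((rho * h - p) ^ 2 - rho ^ 2).

Lemma ID_thermo_bounds (g rho p : R) : 1 < g <= 2 -> 0 < rho -> 0 < p ->
  thermo_bounds rho p (enthalpy (ID g) rho p) (sound2 (ID g) rho p).
Proof.
  intros Hg Hr Hp.
  set (j := 1 / (g - 1)).
  assert (Hj : 1 <= j).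
  { unfold j; apply Rle_div_of_mul_le; lra. }
  assert (Hgj : g * j = j + 1) by (unfold j; field; lra).
  assert (Hh : rho * enthalpy (ID g) rho p = rho + (j + 1) * p)
    by (unfold enthalpy, j; field; lra).
  assert (Hc : sound2 (ID g) rho p = g * p / (rho + (j + 1) * p))
    by (unfold sound2; rewrite (Rmult_comm (enthalpy _ _ _)), Hh; reflexivity).
  unfold thermo_bounds; rewrite Hc, Hh; clearbody j.
  repeat split.
  - apply Rle_div_of_mul_le; nra.
  - assert (0 <= j * p * rho) by (repeat apply Rmult_le_pos; lra).
    assert (0 <= (j - 1) * ((j + 1) * p ^ 2)) by (apply Rmult_le_pos; nra).
    nra.
  - rewrite Rmult_comm, Rmult_div_assoc. apply Rle_div_of_mul_le; [nra|].
    replace (((rho + (j + 1) * p - p) ^ 2 - rho ^ 2) * (g * p))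
      with (p ^ 2 * (g * j) * (2 * rho + j * p)) by ring.
    rewrite Hgj.
    assert (0 <= (j - 1) * ((j + 1) * p)) by (apply Rmult_le_pos; nra).
    assert (0 <= p ^ 2 * ((2 * j + 1) * rho + (j - 1) * ((j + 1) * p)))
      by (apply Rmult_le_pos; nra).
    nra.
Qed.

Lemma TM_thermo_bounds (rho p : R) : 0 < rho -> 0 < p ->
  thermo_bounds rho p (enthalpy TM rho p) (sound2 TM rho p).
Proof.
  intros Hr Hp.
  set (S := sqrt (9 * p ^ 2 + 4 * rho ^ 2)).
  assert (HS : 0 <= S) by apply sqrt_pos.
  assert (HS2 : S * S = 9 * p ^ 2 + 4 * rho ^ 2) by (apply sqrt_sqrt; nra).
  assert (Hh : rho * enthalpy TM rho p = (5 * p + S) / 2).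
  { unfold enthalpy.
    replace (9 * p ^ 2 / (4 * rho ^ 2) + 1) with ((9 * p ^ 2 + 4 * rho ^ 2) / (2 * rho) ^ 2)
      by (field; lra).
    rewrite sqrt_div_sq by nra. fold S. field. lra. }
  unfold thermo_bounds, sound2; fold S; rewrite Hh; clearbody S.
  repeat split.
  - apply Rle_div_of_mul_le; nra.
  - nra.
  - rewrite Rmult_comm, Rmult_div_assoc. apply Rle_div_of_mul_le; [nra|].
    assert (0 <= p * S) by nra.
    nra.
Qed.

Lemma IP_thermo_bounds (rho p : R) : 0 < rho -> 0 < p ->
  thermo_bounds rho p (enthalpy IP rho p) (sound2 IP rho p).
Proof.
  intros Hr Hp.
  set (S := sqrt (4 * p ^ 2 + rho ^ 2)).
  assert (HS : 0 <= S) by apply sqrt_pos.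
  assert (HS2 : S * S = 4 * p ^ 2 + rho ^ 2) by (apply sqrt_sqrt; nra).
  assert (Hh : rho * enthalpy IP rho p = 2 * p + S).
  { unfold enthalpy.
    replace (4 * p ^ 2 / rho ^ 2 + 1) with ((4 * p ^ 2 + rho ^ 2) / rho ^ 2) by (field; lra).
    rewrite sqrt_div_sq by nra. fold S. field. lra. }
  unfold thermo_bounds, sound2; fold S; rewrite Hh; clearbody S.
  repeat split.
  - apply Rle_div_of_mul_le; nra.
  - nra.
  - rewrite Rmult_comm, Rmult_div_assoc. apply Rle_div_of_mul_le; [nra|].
    assert (0 <= p * S) by nra.
    nra.
Qed.

Lemma RC_thermo_bounds (rho p : R) : 0 < rho -> 0 < p ->
  thermo_bounds rho p (enthalpy RC rho p) (sound2 RC rho p).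
Proof.
  intros Hr Hp.
  assert (Hpr : 0 < p * rho) by nra.
  assert (Hh : rho * enthalpy RC rho p - p
               = (9 * p ^ 2 + 6 * p * rho + 2 * rho ^ 2) / (3 * p + 2 * rho))
    by (unfold enthalpy; field; lra).
  unfold thermo_bounds, sound2; rewrite Hh.
  repeat split.
  - apply Rle_div_of_mul_le; nra.
  - assert (E : ((9 * p ^ 2 + 6 * p * rho + 2 * rho ^ 2) / (3 * p + 2 * rho)) ^ 2
                - (rho ^ 2 + p ^ 2)
              = p * (72 * p ^ 3 + 96 * p ^ 2 * rho + 59 * p * rho ^ 2 + 12 * rho ^ 3)
                / (3 * p + 2 * rho) ^ 2)
      by (field; lra).
    assert (0 <= p * (72 * p ^ 3 + 96 * p ^ 2 * rho + 59 * p * rho ^ 2 + 12 * rho ^ 3)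
                / (3 * p + 2 * rho) ^ 2) by (apply Rle_div_of_mul_le; nra).
    lra.
  - set (B := 6 * p ^ 2 + 4 * p * rho + rho ^ 2).
    set (C := 9 * p ^ 2 + 12 * p * rho + 2 * rho ^ 2).
    set (P := 324 * p ^ 5 + 864 * p ^ 4 * rho + 954 * p ^ 3 * rho ^ 2
              + 558 * p ^ 2 * rho ^ 3 + 155 * p * rho ^ 4 + 16 * rho ^ 5).
    assert (HB : 0 < B) by (unfold B; nra).
    assert (HC : 0 < C) by (unfold C; nra).
    assert (HP : 0 <= P).
    { unfold P; repeat apply Rplus_le_le_0_compat;
        repeat apply Rmult_le_pos; try apply pow_le; lra. }
    match goal with |- _ <= ?R =>
      assert (E : R - p ^ 2 = p ^ 2 * P / (B * C * (3 * p + 2 * rho))) end.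
    { unfold B, C, P. field. repeat split; nra. }
    assert (0 <= p ^ 2 * P / (B * C * (3 * p + 2 * rho))).
    { apply Rle_div_of_mul_le.
      - apply Rmult_lt_0_compat; [apply Rmult_lt_0_compat|]; lra.
      - rewrite Rmult_0_l; apply Rmult_le_pos; nra. }
    lra.
Qed.

Lemma eos_thermo_bounds (e : EOS) (rho p : R) : eos_ok e -> 0 < rho -> 0 < p ->
  thermo_bounds rho p (enthalpy e rho p) (sound2 e rho p).
Proof.
  destruct e; intros He Hr Hp.
  - now apply ID_thermo_bounds.
  - now apply TM_thermo_bounds.
  - now apply IP_thermo_bounds.
  - now apply RC_thermo_bounds.
Qed.

Lemma specrad_le_gap (av c t : R) :
  0 <= av < 1 -> 0 <= c -> (av + c) / (1 + c * av) <= t ->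
  av <= t /\ c * (1 - t * av) <= t - av.
Proof.
  intros Hav Hc Ht.
  assert (Hd : 0 < 1 + c * av) by nra.
  apply (Rmult_le_compat_r (1 + c * av)) in Ht; [|lra].
  unfold Rdiv in Ht; rewrite Rmult_assoc, Rinv_l, Rmult_1_r in Ht by lra.
  assert (0 <= c * (1 - av * av)) by (apply Rmult_le_pos; nra).
  split; nra.
Qed.

Lemma energy_gap (Q p c t av a : R) :
  0 <= Q -> p ^ 2 <= c ^ 2 * (Q + p ^ 2) -> 0 <= av < 1 -> 0 <= c ->
  av <= t -> c * (1 - t * av) <= t - av -> t - av <= a ->
  p ^ 2 * ((1 - t ^ 2) * (1 - av ^ 2)) <= a ^ 2 * Q.
Proof.
  intros HQ Hcs Hav Hc Htav Hgap Ha.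
  assert (0 <= a ^ 2 * Q) by (apply Rmult_le_pos; [apply pow2_ge_0 | exact HQ]).
  destruct (Rle_or_lt 1 t) as [Ht | Ht].
  - assert (0 <= p ^ 2 * ((t ^ 2 - 1) * (1 - av ^ 2))).
    { apply Rmult_le_pos; [apply pow2_ge_0 | apply Rmult_le_pos; nra]. }
    nra.
  - set (A := t - av) in *; set (B := 1 - t * av) in *.
    assert (HB : 0 < B) by (unfold B; nra).
    assert (HcB : 0 <= c * B) by (apply Rmult_le_pos; lra).
    assert (Hsound : p ^ 2 * B ^ 2 <= A ^ 2 * (Q + p ^ 2)).
    { assert ((c * B) ^ 2 <= A ^ 2) by (apply pow_incr; lra).
      assert (p ^ 2 * B ^ 2 <= c ^ 2 * (Q + p ^ 2) * B ^ 2)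
        by (apply Rmult_le_compat_r; [apply pow2_ge_0 | exact Hcs]).
      assert ((c * B) ^ 2 * (Q + p ^ 2) <= A ^ 2 * (Q + p ^ 2))
        by (apply Rmult_le_compat_r; [nra | assumption]).
      nra. }
    assert (A ^ 2 * Q <= a ^ 2 * Q)
      by (apply Rmult_le_compat_r; [exact HQ | apply pow_incr; unfold A in *; lra]).
    replace ((1 - t ^ 2) * (1 - av ^ 2)) with (B ^ 2 - A ^ 2) by (unfold A, B; ring).
    nra.
Qed.

Definition cons_state (rho v p h : R) : state :=
  (rho * lorentz v, rho * h * lorentz v ^ 2 * v, rho * h * lorentz v ^ 2 - p).

Lemma lf_splitting (rho v p h c t s : R) :
  0 < rho -> 0 < p -> Rabs v < 1 -> 0 <= c -> thermo_bounds rho p h (c ^ 2) ->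
  (Rabs v + c) / (1 + c * Rabs v) <= t -> s * s = 1 ->
  Uad (cons_state rho v p h) ->
  Uad_closure (sadd (sscale t (cons_state rho v p h))
                    (sscale s (flux (mkPrim rho v p) (cons_state rho v p h)))).
Proof.
  intros Hr Hp Hv Hc [_ [HQ Hcs]] Ht Hs HU.
  pose proof (Uad_abs_mom _ _ _ HU) as Hm.
  unfold cons_state in *; cbn [sscale sadd flux pvel ppres].
  pose proof (lorentz_pos v Hv) as HG0; pose proof (lorentz_sq v Hv) as HG.
  set (G := lorentz v) in *; set (H := rho * h * G ^ 2) in *.
  set (Q := (rho * h - p) ^ 2 - rho ^ 2 - p ^ 2).
  set (a := t + s * v).
  set (av := Rabs v) in *.
  assert (Hav : 0 <= av) by apply Rabs_pos.
  assert (Hv2 : v ^ 2 = av ^ 2) by (unfold av; rewrite pow2_abs; reflexivity).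
  destruct (specrad_le_gap av c t) as [Htav Hgap]; [lra | exact Hc | exact Ht |].
  assert (Hsv : - av <= s * v).
  { unfold av; rewrite <- (Rabs_mul_unit s v Hs).
    pose proof (Rle_abs (- (s * v))); rewrite Rabs_Ropp in *; lra. }
  assert (Hgap2 : p ^ 2 * ((1 - t ^ 2) * (1 - v ^ 2)) <= a ^ 2 * Q).
  { rewrite Hv2; apply (energy_gap Q p c t av a); unfold Q, a; lra. }
  assert (Hcone : (t * (rho * G) + s * (rho * G * v)) ^ 2
                  + (t * (H * v) + s * (H * v * v + p)) ^ 2
                  <= (t * (H - p) + s * (H * v)) ^ 2).
  { assert (Hid : (t * (H - p) + s * (H * v)) ^ 2
                  - ((t * (rho * G) + s * (rho * G * v)) ^ 2
                     + (t * (H * v) + s * (H * v * v + p)) ^ 2)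
                  = G ^ 2 * (a ^ 2 * Q - p ^ 2 * ((1 - t ^ 2) * (1 - v ^ 2)))
                    + (G ^ 2 * (1 - v ^ 2) - 1)
                      * (p ^ 2 * (1 - t ^ 2) + (rho * h * G * a) ^ 2)
                    - (s * s - 1) * p ^ 2)
      by (unfold H, Q, a; ring).
    rewrite HG, Hs in Hid.
    assert (0 <= G ^ 2 * (a ^ 2 * Q - p ^ 2 * ((1 - t ^ 2) * (1 - v ^ 2))))
      by (apply Rmult_le_pos; [apply pow2_ge_0 | lra]).
    lra. }
  apply Uad_closure_of_sq; [| | exact Hcone].
  - replace (t * (rho * G) + s * (rho * G * v)) with (rho * G * a) by (unfold a; ring).
    apply Rmult_le_pos; [apply Rmult_le_pos|]; unfold a; lra.
  - assert (Hsm : - (H - p) < s * (H * v)).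
    { pose proof (Rle_abs (- (s * (H * v)))).
      rewrite Rabs_Ropp, Rabs_mul_unit in * by exact Hs; lra. }
    assert (HE : 0 < H - p) by (pose proof (Rabs_pos (H * v)); lra).
    destruct (Rle_or_lt 1 t) as [Ht1 | Ht1].
    + assert (0 <= (t - 1) * (H - p)) by (apply Rmult_le_pos; lra).
      lra.
    + apply Rlt_le, (pos_of_abs_le _ (s * (t * (H * v) + s * (H * v * v + p)))).
      * rewrite Rabs_mul_unit by exact Hs.
        apply Rsqr_le_abs_0; rewrite !Rsqr_pow2.
        pose proof (pow2_ge_0 (t * (rho * G) + s * (rho * G * v))); lra.
      * assert (Hsum : t * (H - p) + s * (H * v) + s * (t * (H * v) + s * (H * v * v + p))
                       = H * a * (1 + s * v) + p * (1 - t) + p * (s * s - 1))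
          by (unfold a; ring).
        rewrite Hs in Hsum.
        assert (0 <= H * a * (1 + s * v))
          by (apply Rmult_le_pos; [apply Rmult_le_pos|]; unfold a; lra).
        nra.
Qed.

Lemma lf_splitting_eos (e : EOS) (w : prim) (u : state) (t s : R) :
  eos_ok e -> is_prim_of e w u -> Uad u -> specrad e w <= t -> s * s = 1 ->
  Uad_closure (sadd (sscale t u) (sscale s (flux w u))).
Proof.
  destruct w as [rho v p]; intros He (Hr & Hp & Hv & <-) HU Ht Hs; cbn in Hr, Hp, Hv.
  pose proof (eos_thermo_bounds e rho p He Hr Hp) as Hth.
  apply (lf_splitting rho v p (enthalpy e rho p) (sound e rho p)); auto.
  - apply sqrt_pos.
  - unfold sound; rewrite pow2_sqrt by apply Hth; exact Hth.
Qed.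

Lemma fv_update_decomp (e : EOS) (dt dx wi : R)
  (uL uC uR : state) (wL wC wR : prim) :
  fv_update e dt dx wi wL uL wC uC wR uR =
  sadd (sscale (1 - dt / (wi * dx) * (lam e wL wC + lam e wC wR) / 2) uC)
    (sadd (sscale (dt / (wi * dx) / 2)
             (sadd (sscale (lam e wL wC) uL) (sscale 1 (flux wL uL))))
          (sscale (dt / (wi * dx) / 2)
             (sadd (sscale (lam e wC wR) uR) (sscale (-1) (flux wR uR))))).
Proof.
  destruct uL as [[DL mL] EL], uC as [[DC mC] EC], uR as [[DR mR] ER].
  unfold fv_update, rusanov, flux, sadd, ssub, sscale; cbv beta iota.
  set (k := dt / (wi * dx)); f_equal; [f_equal|]; field.
Qed.

Theorem theorem1 (e : EOS) (dx dt wi : R)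
  (uL uC uR : state) (wL wC wR : prim) :
  eos_ok e -> 0 < dx -> 0 < dt -> 0 < wi ->
  Uad uL -> Uad uC -> Uad uR ->
  is_prim_of e wL uL -> is_prim_of e wC uC -> is_prim_of e wR uR ->
  dt * (lam e wL wC + lam e wC wR) / (2 * wi * dx) < 1 ->
  Uad (fv_update e dt dx wi wL uL wC uC wR uR).
Proof.
  intros He Hdx Hdt Hwi HL HC HR PL _ PR Hcfl.
  assert (Hk : 0 < dt / (wi * dx)) by (apply Rdiv_lt_0_compat; nra).
  rewrite fv_update_decomp.
  apply Uad_add_closure; [apply Uad_scale; [|exact HC] | apply Uad_closure_add].
  - replace (dt / (wi * dx) * (lam e wL wC + lam e wC wR) / 2)
      with (dt * (lam e wL wC + lam e wC wR) / (2 * wi * dx)) by (field; lra).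
    lra.
  - apply Uad_closure_scale; [lra|].
    apply (lf_splitting_eos e wL); auto; [apply Rmax_l | ring].
  - apply Uad_closure_scale; [lra|].
    apply (lf_splitting_eos e wR); auto; [apply Rmax_r | ring].
Qed.
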